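(* Let $n,i,j$ be positive integers and $s=(2^{2n}-1)/3$. Let $$f(x)=(x^{2^i}+x^{2^j})(1+x^s+x^{2s})+x^{2^j}\in\mathbb{F}_{2^{2n}}[x].$$ For a positive integer $k$ let $\widetilde{2^k}$ denote a positive integer inverse of $2^k$ modulo $s$ (i.e. $2^k\widetilde{2^k}\equiv1\pmod s$), and let $u$ be the integer with $0\le u<3$ and $u\equiv(-1)^j(1-2^j\widetilde{2^j})/s\pmod 3$. Then the inverse of $f$ over $\mathbb{F}_{2^{2n}}$ is $$f^{-1}(x)=(x^{\widetilde{2^i}}+x^{\widetilde{2^j}})(1+x^s+x^{2s})+x^{\widetilde{2^j}+us},$$ i.e. $f^{-1}(f(c))=c$ for all $c\in\mathbb{F}_{2^{2n}}$.
   Context: A polynomial $g$ is the inverse of $f$ over $\mathbb{F}_q$ if $g(f(c))=c$ for all $c\in\mathbb{F}_q$. (The polynomial $f$ here is a permutation polynomial of $\mathbb{F}_{2^{2n}}$.) *)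

From mathcomp Require Import all_boot all_order all_algebra all_field.
Set Implicit Arguments. Unset Strict Implicit. Unset Printing Implicit Defensive.
Import GRing.Theory Num.Theory.
Local Open Scope ring_scope.

Definition s_of (n : nat) : nat := ((2 ^ (2 * n)).-1 %/ 3)%N.

Definition f_fun (F : finFieldType) (n i j : nat) (x : F) : F :=
  (x ^+ (2 ^ i) + x ^+ (2 ^ j)) * (1 + x ^+ s_of n + x ^+ (2 * s_of n))
  + x ^+ (2 ^ j).

(* u in {0,1,2} with u = (-1)^j (1 - 2^j * tj) / s  (mod 3); the division
   is exact when 2^j * tj = 1 (mod s). *)
Definition u_of (n j tj : nat) : nat :=
  absz (modz ((-1) ^+ j * divz (1 - (2 ^ j * tj)%N%:Z) (s_of n)%:Z) 3).

Definition finv_fun (F : finFieldType) (n ti tj u : nat) (x : F) : F :=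
  (x ^+ ti + x ^+ tj) * (1 + x ^+ s_of n + x ^+ (2 * s_of n))
  + x ^+ (tj + u * s_of n).

From mathcomp Require Import all_boot all_order all_algebra all_field.
From mathcomp Require Import ring.
Set Implicit Arguments. Unset Strict Implicit. Unset Printing Implicit Defensive.
Import GRing.Theory Num.Theory.
Local Open Scope ring_scope.

(* Over F with |F| = 3s + 1, the factor 1 + x^s + x^(2s) is 1 when x^s = 1
   (characteristic 2) and 0 when x^s is a nontrivial cube root of unity.  So f
   is x^(2^i) on the subgroup of s-th roots of unity, where ti inverts 2^i, and
   x^(2^j) on its complement in F^*, where the correction u s is exactly what
   makes 2^j (tj + u s) = 1 modulo |F^*| = 3s: writing 2^j tj = 1 + m s, it
   forces m + 2^j u = 0 mod 3, using 2^j = (-1)^j mod 3. *)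

Lemma eqz_mod_nat (a b d : nat) : (a = b %[mod d])%N -> (a%:Z = b%:Z %[mod d%:Z])%Z.
Proof. by rewrite !modz_nat => ->. Qed.

Lemma pow2_mod3 (j : nat) : ((2 ^ j)%N%:Z = (-1) ^+ j %[mod 3])%Z.
Proof. by rewrite -natz natrX -modzXm -[in RHS]modzXm. Qed.

Lemma pow2_inv_lift_mod3S (S j t : nat) : (0 < S)%N -> (2 ^ j * t = 1 %[mod S])%N ->
  let u := absz (modz ((-1) ^+ j * divz (1 - (2 ^ j * t)%N%:Z) S%:Z) 3) in
  (2 ^ j * (t + u * S) = 1 %[mod 3 * S])%N.
Proof.
move=> S_gt0 /eqz_mod_nat/eqP; rewrite eqz_mod_dvd => /dvdzP[m hm] /=.
have S_neq0 : S%:Z != 0 by rewrite eqz_nat -lt0n.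
have -> : divz (1 - (2 ^ j * t)%N%:Z) S%:Z = - m.
  by rewrite -opprB hm -mulNr mulzK.
set e : int := (-1) ^+ j.
set u := absz _.
have hu : u%:Z = e * - m - (e * - m %/ 3)%Z * 3.
  by rewrite gez0_abs ?modz_ge0 // {2}(divz_eq (e * - m) 3) addrAC subrr add0r.
have /eqP := pow2_mod3 j; rewrite eqz_mod_dvd => /dvdzP[a ha].
apply/eqP; rewrite -eqz_nat -!modz_nat -/(_ == _ %[mod _])%Z eqz_mod_dvd.
apply/dvdzP; exists (a * u%:Z - e * (e * - m %/ 3)%Z).
have hN : (2 ^ j * t)%N%:Z = 1 + m * S%:Z by rewrite -hm addrC subrK.
have h2 : (2 ^ j)%N%:Z = e + a * 3 by rewrite -ha addrC subrK.
rewrite mulnDr PoszD hN !PoszM h2 hu /e -signr_odd.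
by case: (odd j); ring.
Qed.

Lemma s_of_spec (n : nat) : (0 < n)%N -> (3 * s_of n).+1 = (2 ^ (2 * n))%N.
Proof.
move=> n_gt0; have pow_gt0 : (0 < 4 ^ n)%N by rewrite expn_gt0.
have pow_mod3 : (4 ^ n = 1 %[mod 3])%N by rewrite -modnXm exp1n.
by rewrite /s_of expnM mulnC divnK ?prednK // -subn1 -eqn_mod_dvd //; apply/eqP.
Qed.

Lemma s_of_gt0 (n : nat) : (0 < n)%N -> (0 < s_of n)%N.
Proof.
move=> n_gt0; rewrite lt0n; apply/eqP => s0.
move: (s_of_spec n_gt0); rewrite s0 muln0 -[1%N](expn0 2) => /eqP.
by rewrite eqn_exp2l // eq_sym muln_eq0 -[n == 0%N]negbK -lt0n n_gt0.
Qed.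

Lemma cube_root_unity_primitive (R : idomainType) (w : R) :
  w ^+ 3 = 1 -> w != 1 -> 3.-primitive_root w.
Proof.
move=> w3 w_neq1; have [m prim_w m_dvd3] := prim_order_exists (isT : (0 < 3)%N) w3.
case/primeP: (isT : prime 3) => _ /(_ m m_dvd3) /orP[/eqP m1 | /eqP m3].
  by move: w_neq1; rewrite -[w]expr1 -m1 prim_expr_order ?eqxx.
by rewrite -m3.
Qed.

Lemma cube_root_unity_sum (R : idomainType) (w : R) :
  w ^+ 3 = 1 -> w != 1 -> 1 + w + w ^+ 2 = 0.
Proof.
move=> w3 w_neq1; apply/eqP.
have : (w - 1) * (1 + w + w ^+ 2) == 0.
  have -> : (w - 1) * (1 + w + w ^+ 2) = w ^+ 3 - 1 by ring.
  by rewrite w3 subrr.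
by rewrite mulf_eq0 subr_eq0 (negbTE w_neq1).
Qed.

Section InverseOnSquareField.
Context {F : finFieldType} (n : nat).
Local Notation s := (s_of n).

Section Pchar2.
Hypothesis F_pchar2 : 2%N \in [pchar F].

Lemma sum3_expr_s_eq1 (x : F) : x ^+ s = 1 -> 1 + x ^+ s + x ^+ (2 * s) = 1.
Proof. by move=> xs1; rewrite mulnC exprM xs1 expr1n (addrr_pchar2 F_pchar2) add0r. Qed.

Lemma f_fun_expr_s_eq1 (i j : nat) (x : F) :
  x ^+ s = 1 -> f_fun n i j x = x ^+ (2 ^ i).
Proof.
move=> xs1; rewrite /f_fun sum3_expr_s_eq1 // mulr1.
by rewrite -addrA (addrr_pchar2 F_pchar2) addr0.
Qed.

Lemma finv_fun_expr_s_eq1 (ti tj u : nat) (y : F) :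
  y ^+ s = 1 -> finv_fun n ti tj u y = y ^+ ti.
Proof.
move=> ys1; rewrite /finv_fun sum3_expr_s_eq1 // mulr1 exprD mulnC exprM ys1 expr1n mulr1.
by rewrite -addrA (addrr_pchar2 F_pchar2) addr0.
Qed.

End Pchar2.

Section Card3s1.
Hypothesis F_card : #|F| = (3 * s).+1.

Lemma expr_3s_eq1 (x : F) : x != 0 -> x ^+ (3 * s) = 1.
Proof. by move=> x_neq0; apply: (mulfI x_neq0); rewrite mulr1 -exprS -F_card expf_card. Qed.

Lemma sum3_expr_s_eq0 (x : F) : x != 0 -> x ^+ s != 1 -> 1 + x ^+ s + x ^+ (2 * s) = 0.
Proof.
move=> x_neq0 xs_neq1; rewrite mulnC exprM; apply: cube_root_unity_sum => //.
by rewrite -exprM mulnC expr_3s_eq1.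
Qed.

Lemma f_fun_expr_s_neq1 (i j : nat) (x : F) :
  x != 0 -> x ^+ s != 1 -> f_fun n i j x = x ^+ (2 ^ j).
Proof. by move=> x_neq0 xs_neq1; rewrite /f_fun sum3_expr_s_eq0 // mulr0 add0r. Qed.

Lemma finv_fun_expr_s_neq1 (ti tj u : nat) (y : F) :
  y != 0 -> y ^+ s != 1 -> finv_fun n ti tj u y = y ^+ (tj + u * s).
Proof. by move=> y_neq0 ys_neq1; rewrite /finv_fun sum3_expr_s_eq0 // mulr0 add0r. Qed.

End Card3s1.

Lemma f_fun0 (i j : nat) : f_fun n i j (0 : F) = 0.
Proof. by rewrite /f_fun !expr0n !expn_eq0 /= !addr0 mul0r. Qed.

Lemma finv_fun0 (ti tj u : nat) : (0 < ti)%N -> (0 < tj)%N ->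
  finv_fun n ti tj u (0 : F) = 0.
Proof.
move=> ti_gt0 tj_gt0.
by rewrite /finv_fun !expr0n !eqn0Ngt ti_gt0 tj_gt0 addn_gt0 tj_gt0 /= !addr0 mul0r.
Qed.

End InverseOnSquareField.

Theorem corollary4p4 (F : finFieldType) (n i j ti tj : nat)
  (hF : #|F| = (2 ^ (2 * n))%N)
  (hn : (0 < n)%N) (hi : (0 < i)%N) (hj : (0 < j)%N)
  (hti : (0 < ti)%N) (htj : (0 < tj)%N)
  (hti_inv : (2 ^ i * ti = 1 %[mod s_of n])%N)
  (htj_inv : (2 ^ j * tj = 1 %[mod s_of n])%N) :
  forall c : F, finv_fun n ti tj (u_of n j tj) (f_fun n i j c) = c.
Proof.
move=> c; have [->|c_neq0] := eqVneq c 0; first by rewrite f_fun0 finv_fun0.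
have F_pchar2 : 2%N \in [pchar F] := card_finPcharP hF isT.
have F_card : #|F| = (3 * s_of n).+1 by rewrite s_of_spec.
have [cs1|cs_neq1] := eqVneq (c ^+ s_of n) 1.
  rewrite (f_fun_expr_s_eq1 F_pchar2) // (finv_fun_expr_s_eq1 F_pchar2); last first.
    by rewrite -exprM mulnC exprM cs1 expr1n.
  by rewrite -exprM -(expr_mod _ cs1) hti_inv expr_mod.
have c3s := expr_3s_eq1 F_card c_neq0.
have cs_prim : 3.-primitive_root (c ^+ s_of n).
  by apply: cube_root_unity_primitive cs_neq1; rewrite -exprM mulnC.
have y_neq0 : c ^+ (2 ^ j) != 0 by rewrite expf_neq0.
have ys_neq1 : (c ^+ (2 ^ j)) ^+ s_of n != 1.
  by rewrite -exprM mulnC exprM -(prim_order_dvd cs_prim) Euclid_dvdX.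
rewrite (f_fun_expr_s_neq1 F_card) // (finv_fun_expr_s_neq1 F_card) // -exprM /u_of.
by rewrite -(expr_mod _ c3s) (pow2_inv_lift_mod3S (s_of_gt0 hn) htj_inv) expr_mod.
Qed.
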